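(* Let $G$ be an irreducible triangulation of a surface with Euler genus $g\geq 1$, and let $S$ be a good independent set of $G$ such that $\phi(S)\succeq\phi(S')$ for every good independent set $S'$ of $G$. Let $i\in\{4,\dots,9\}$ and let $v$ be a vertex of $G-V(H_i)$ with $\deg_G(v)\leq i$. Then $v$ has at least three neighbours in some connected component of $H_i$.
   Context: Surfaces, triangulations and irreducibility: a triangulation of a surface $\Sigma$ is a 2-cell embedding of a simple finite graph in $\Sigma$ in which each face is bounded by three edges and each pair of faces share at most one edge; it is irreducible if no edge contraction (delete $vw$, identify $v,w$, remove parallel edges) yields another triangulation of $\Sigma$. Euler genus: $2h$ for the orientable surface with $h$ handles, $h$ for the non-orientable surface with $h$ crosscaps. (Such $G$ has minimum degree at least 4.) For a vertex $v$, $G_v$ is the subgraph of $G$ induced by $v$ and its neighbours. Two graphs are compatible if they share at most two vertices. For a rooted binary tree $T$ (each non-leaf node has exactly two children) with leaf set $L(T)$ and subtrees $T[x]$ rooted at nodes $x$, given subgraphs $G\langle u\rangle$ for leaves $u$, set $G\langle x\rangle:=\bigcup_{u\in L(T[x])}G\langle u\rangle$ for non-leaf $x$; this is a tree representation if $G\langle a\rangle,G\langle b\rangle$ are compatible whenever $a,b$ have a common parent. A tree representation respects a vertex set $S$ if $L(T)=S$ and $G\langle u\rangle=G_u$ for each $u\in S$. For an independent set $S$ of $G$ with $\deg_G(v)\leq 9$ for all $v\in S$, and $i\in\{4,\dots,9\}$, let $S_i:=\{v\in S:\deg_G(v)=i\}$, $\widehat{S_i}:=S_4\cup\dots\cup S_i$,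 and $H_i:=\bigcup_{v\in\widehat{S_i}}G_v$. Such $S$ is good if there is a tree representation $(T,\{G_u:u\in S\})$ respecting $S$ such that for every $i\in\{4,\dots,9\}$ and every component $X$ of $H_i$ there is a node $x$ of $T$ with $L(T[x])=\widehat{S_i}\cap V(X)$ and $X=G\langle x\rangle$. Let $\phi(S):=(|S_4|,|S_5|,\dots,|S_9|)$, and write $(a_4,\dots,a_9)\succ(b_4,\dots,b_9)$ if there is $j\in\{4,\dots,8\}$ with $a_i=b_i$ for all $i\in\{4,\dots,j\}$ and $a_{j+1}>b_{j+1}$ (so $\succeq$ is a linear order). *)

From mathcomp Require Import all_boot.
Set Implicit Arguments. Unset Strict Implicit. Unset Printing Implicit Defensive.

(* A triangulation G is given by a vertex set Vs of a finite type V, a     *)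
(* simple adjacency relation e, and the list Fs of its (triangular) faces, *)
(* each face being its 3-element vertex set.                              *)

Section Defs.
Variable V : finType.

Definition nbhd (e : rel V) (x : V) : {set V} := [set y | e x y].
Definition deg (e : rel V) (x : V) : nat := #|nbhd e x|.

Definition link (e : rel V) (Fs : seq {set V}) (v : V) : rel V :=
  fun a b => [&& e v a, e v b, a != b & [set v; a; b] \in Fs].

Definition is_triang (Vs : {set V}) (e : rel V) (Fs : seq {set V}) : Prop :=
  (forall x y, e x y = e y x) /\
  (forall x, ~~ e x x) /\
  (forall x y, e x y -> (x \in Vs) && (y \in Vs)) /\
  uniq Fs /\ Fs != [::] /\
  (forall f, f \in Fs ->
      #|f| = 3 /\ (forall x y, x \in f -> y \in f -> x != y -> e x y)) /\
  (forall x y, e x y -> count (fun f : {set V} => (x \in f) && (y \in f)) Fs = 2) /\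
  (* the link of every vertex is connected (hence a single cycle) *)
  (forall v, v \in Vs -> forall x y, e v x -> e v y -> connect (link e Fs v) x y) /\
  (forall x y, x \in Vs -> y \in Vs -> connect e x y).

Definition nedges (e : rel V) : nat := #|[set p : V * V | e p.1 p.2]| %/ 2.

(* Euler genus = 2 - chi, chi = |V| - |E| + |F| (chi <= 2 always) *)
Definition euler_genus (Vs : {set V}) (e : rel V) (Fs : seq {set V}) : nat :=
  (nedges e + 2) - (#|Vs| + size Fs).

(* contraction of the edge vw: w is identified with v *)
Definition contract_e (e : rel V) (v w : V) : rel V :=
  fun x y => [&& x != w, y != w, x != y &
                 [|| e x y, (x == v) && e w y | (y == v) && e w x]].
Definition mapw (v w : V) (f : {set V}) : {set V} :=
  if w \in f then v |: (f :\ w) else f.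
Definition contract_F (Fs : seq {set V}) (v w : V) : seq {set V} :=
  [seq mapw v w f | f : {set V} <- Fs & ~~ ((v \in f) && (w \in f))].

Definition irreducible (Vs : {set V}) (e : rel V) (Fs : seq {set V}) : Prop :=
  forall v w, e v w -> ~ is_triang (Vs :\ w) (contract_e e v w) (contract_F Fs v w).

Definition subgraph := ({set V} * {set V * V})%type.

Definition cnbhd (e : rel V) (v : V) : {set V} := v |: nbhd e v.
Definition Gv (e : rel V) (v : V) : subgraph :=
  (cnbhd e v, [set p | [&& p.1 \in cnbhd e v, p.2 \in cnbhd e v & e p.1 p.2]]).
Definition sgU (A B : subgraph) : subgraph := (A.1 :|: B.1, A.2 :|: B.2).
Definition compatible (A B : subgraph) : bool := #|A.1 :&: B.1| <= 2.

Inductive btree := Leaf of V | Node of btree & btree.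
Fixpoint leaves (t : btree) : seq V :=
  match t with Leaf u => [:: u] | Node l r => leaves l ++ leaves r end.
(* y is (the subtree rooted at) a node of t *)
Fixpoint is_subtree (y t : btree) : Prop :=
  y = t \/ match t with Leaf _ => False | Node l r => is_subtree y l \/ is_subtree y r end.
Fixpoint Gt (e : rel V) (t : btree) : subgraph :=
  match t with Leaf u => Gv e u | Node l r => sgU (Gt e l) (Gt e r) end.
Fixpoint tree_rep (e : rel V) (t : btree) : bool :=
  match t with
  | Leaf _ => true
  | Node l r => [&& compatible (Gt e l) (Gt e r), tree_rep e l & tree_rep e r]
  end.
Definition respects (e : rel V) (t : btree) (S : {set V}) : Prop :=
  tree_rep e t /\ uniq (leaves t) /\ [set x in leaves t] = S.

Definition Si (e : rel V) (S : {set V}) (i : nat) : {set V} :=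
  [set x in S | deg e x == i].
Definition hatS (e : rel V) (S : {set V}) (i : nat) : {set V} :=
  [set x in S | 4 <= deg e x <= i].
Definition Hsg (e : rel V) (S : {set V}) (i : nat) : subgraph :=
  (\bigcup_(x in hatS e S i) (Gv e x).1, \bigcup_(x in hatS e S i) (Gv e x).2).

Definition sgrel (X : subgraph) : rel V := fun x y => (x, y) \in X.2.
Definition sgcomp (X : subgraph) (x : V) : subgraph :=
  ([set y in X.1 | connect (sgrel X) x y],
   [set p in X.2 | connect (sgrel X) x p.1]).

Definition good (Vs : {set V}) (e : rel V) (S : {set V}) : Prop :=
  [/\ S \subset Vs,
      (forall x y, x \in S -> y \in S -> ~~ e x y),
      (forall x, x \in S -> deg e x <= 9)
    & exists t, respects e t S /\
        forall i, 4 <= i <= 9 -> forall x, x \in (Hsg e S i).1 ->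
          exists2 y, is_subtree y t &
            [set z in leaves y] = hatS e S i :&: (sgcomp (Hsg e S i) x).1 /\
            Gt e y = sgcomp (Hsg e S i) x].

Definition phi (e : rel V) (S : {set V}) (i : nat) : nat := #|Si e S i|.

Definition phi_gt (a b : nat -> nat) : Prop :=
  exists j, [/\ 4 <= j <= 9, (forall k, 4 <= k < j -> a k = b k) & b j < a j].
Definition phi_ge (a b : nat -> nat) : Prop :=
  (forall k, 4 <= k <= 9 -> a k = b k) \/ phi_gt a b.

End Defs.

(* Suppose [v] has at most two neighbours in every component of [H_i], and let
   [d = deg v <= i]; [d >= 4] because an irreducible triangulation of positive
   genus has no vertex of degree 3 (contracting an edge at it would leave a
   triangulation, unless its star closes up into a tetrahedron, i.e. a sphere).
   Then [S' = {v} U hat(S_d)] is good as well: in a tree representation of [S],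
   hang the subtrees representing the components of [H_d] that meet [N(v)] below a
   new leaf [v] -- each meets what hangs there already only inside [N(v)], so in at
   most two vertices -- and graft the result next to what remains of the tree once
   the leaves covered by it or of degree above [d] are deleted.  As [S'_k = S_k]
   for [k < d] and [S'_d = S_d U {v}], [phi(S')] exceeds [phi(S)], contradicting
   the maximality of [S]. *)

From mathcomp Require Import all_boot zify.
Set Implicit Arguments. Unset Strict Implicit. Unset Printing Implicit Defensive.

Section BinaryTrees.
Variables (V : finType) (e : rel V).
Implicit Types (t y a b : btree V) (k : pred V).

Lemma subtree_refl t : is_subtree t t.
Proof. by case: t => [u|l r]; left. Qed.

Lemma subtree_trans a b t : is_subtree a b -> is_subtree b t -> is_subtree a t.
Proof.
move=> ab; elim: t => [u|l IHl r IHr]; first by case=> [<-|[]].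
by case=> [<-|[/IHl|/IHr]] //; [right; left | right; right].
Qed.

Lemma subtree_leaves y t : is_subtree y t -> {subset leaves y <= leaves t}.
Proof.
elim: t => [u|l IHl r IHr] /=; first by case=> // ->.
case=> [->//|[/IHl|/IHr] sub] x /sub; rewrite mem_cat => -> //; exact: orbT.
Qed.

Lemma subtree_uniq y t : is_subtree y t -> uniq (leaves t) -> uniq (leaves y).
Proof.
elim: t => [u|l IHl r IHr] /=; first by case=> // ->.
by case=> [->//|[/IHl|/IHr] IH]; rewrite cat_uniq => /and3P[? _ ?]; exact: IH.
Qed.

Lemma subtree_tree_rep y t : is_subtree y t -> tree_rep e t -> tree_rep e y.
Proof.
elim: t => [u|l IHl r IHr] /=; first by case=> // ->.
by case=> [->//|[/IHl|/IHr] IH] /and3P[_ ? ?]; exact: IH.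
Qed.

Lemma size_leaves_gt0 t : 0 < size (leaves t).
Proof. by elim: t => [u|l IHl r IHr] //=; rewrite size_cat addn_gt0 IHl. Qed.

Lemma subtree_size_lt y t :
  is_subtree y t -> y = t \/ size (leaves y) < size (leaves t).
Proof.
elim: t => [u|l IHl r IHr] /=; first by case=> // ->; left.
have l0 := size_leaves_gt0 l; have r0 := size_leaves_gt0 r.
case=> [->|[/IHl|/IHr] [->|lt]]; rewrite ?size_cat; [by left | right; lia ..].
Qed.

Lemma subtrees_nested a b t u : uniq (leaves t) ->
  is_subtree a t -> is_subtree b t -> u \in leaves a -> u \in leaves b ->
  is_subtree a b \/ is_subtree b a.
Proof.
elim: t => [w|l IHl r IHr] /=.
  by move=> _ [->|[]] [->|[]]; left; exact: subtree_refl.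
rewrite cat_uniq => /and3P[ul /hasPn dis ur].
case=> [->|[ha|ha]] hb ua ub; first by right.
- case: hb => [->|[hb|hb]]; first by left; right; left.
    exact: IHl.
  by have := dis u (subtree_leaves hb ub); rewrite (subtree_leaves ha ua).
- case: hb => [->|[hb|hb]]; first by left; right; right.
    by have := dis u (subtree_leaves ha ua); rewrite (subtree_leaves hb ub).
  exact: IHr.
Qed.

Lemma subtree_of_leaves_subset a b t : uniq (leaves t) ->
  is_subtree a t -> is_subtree b t -> {subset leaves a <= leaves b} ->
  is_subtree a b.
Proof.
move=> ut ha hb sub.
have := size_leaves_gt0 a; case E: (leaves a) => [//|u s] _.
have ua : u \in leaves a by rewrite E mem_head.
case: (subtrees_nested ut ha hb ua (sub u ua)) => // ba.
case: (subtree_size_lt ba) => [->|lt]; first exact: subtree_refl.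
by have := uniq_leq_size (subtree_uniq ha ut) sub; rewrite leqNgt lt.
Qed.

Lemma mem_leaves_set t (A : {set V}) u :
  [set z in leaves t] = A -> (u \in leaves t) = (u \in A).
Proof. by move/setP/(_ u); rewrite inE. Qed.

Lemma mem_Gt1 t z : (z \in (Gt e t).1) = has (fun u => z \in cnbhd e u) (leaves t).
Proof. by elim: t => [u|l IHl r IHr] /=; rewrite ?orbF // in_setU has_cat IHl IHr. Qed.

Lemma Gt1S a b : {subset leaves a <= leaves b} -> (Gt e a).1 \subset (Gt e b).1.
Proof.
move=> sub; apply/subsetP => z; rewrite !mem_Gt1 => /hasP[u /sub ub zu].
by apply/hasP; exists u.
Qed.

Lemma leaf_mem_Gt1 t u : u \in leaves t -> u \in (Gt e t).1.
Proof. by move=> ut; rewrite mem_Gt1; apply/hasP; exists u; rewrite ?setU11. Qed.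

Fixpoint prune k t : option (btree V) :=
  match t with
  | Leaf u => if k u then Some (Leaf u) else None
  | Node l r =>
      match prune k l, prune k r with
      | Some l', Some r' => Some (Node l' r')
      | Some l', None => Some l'
      | None, o => o
      end
  end.

Definition oleaves (o : option (btree V)) := if o is Some t then leaves t else [::].

Lemma prune_leaves k t : oleaves (prune k t) = filter k (leaves t).
Proof.
elim: t => [u|l IHl r IHr] /=; first by case: (k u).
rewrite filter_cat -IHl -IHr.
by case: (prune k l) => [l'|]; case: (prune k r) => [r'|] //=; rewrite cats0.
Qed.

Lemma prune_tree_rep k t t' : tree_rep e t -> prune k t = Some t' -> tree_rep e t'.
Proof.
elim: t t' => [u|l IHl r IHr] t' /=; first by case: (k u) => // _ [<-].
case/and3P=> c /IHl hl /IHr hr.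
have Ll := prune_leaves k l; have Lr := prune_leaves k r.
case El: (prune k l) => [l'|]; case Er: (prune k r) => [r'|] // [<-] //=; auto.
rewrite El Er /= in Ll Lr; rewrite (hl l') ?(hr r') // !andbT.
rewrite /compatible in c *; apply: leq_trans c; apply/subset_leq_card/setISS; apply: Gt1S => x;
  by rewrite ?Ll ?Lr mem_filter => /andP[].
Qed.

Lemma prune_id k t : all k (leaves t) -> prune k t = Some t.
Proof.
elim: t => [u|l IHl r IHr] /=; first by rewrite andbT => ->.
by rewrite all_cat => /andP[/IHl -> /IHr ->].
Qed.

Lemma prune_subtree k y t : is_subtree y t -> all k (leaves y) ->
  exists2 t', prune k t = Some t' & is_subtree y t'.
Proof.
elim: t => [u|l IHl r IHr] /=.
  by case=> [->|[]] /= /andP[-> _]; exists (Leaf u); last left.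
case=> [->|[/IHl IH|/IHr IH]] ky.
- by exists (Node l r); [exact: (prune_id ky) | exact: subtree_refl].
- have [l' -> yl'] := IH ky.
  by case: (prune k r) => [r'|]; [exists (Node l' r'); last (right; left) | exists l'].
- have [r' -> yr'] := IH ky.
  by case: (prune k l) => [l'|]; [exists (Node l' r'); last (right; right) | exists r'].
Qed.

Definition graft (o : option (btree V)) (M : btree V) :=
  if o is Some r then Node r M else M.

Lemma leaves_graft o M : leaves (graft o M) = oleaves o ++ leaves M.
Proof. by case: o. Qed.

Lemma subtree_graftr o M : is_subtree M (graft o M).
Proof. by case: o => [r|]; [right; right; exact: subtree_refl | exact: subtree_refl]. Qed.

Lemma subtree_graftl r y M : is_subtree y r -> is_subtree y (graft (Some r) M).
Proof. by right; left. Qed.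

End BinaryTrees.

Lemma count_eq2P (T : eqType) (P : pred T) (s : seq T) : uniq s -> count P s = 2 ->
  exists f1 f2, [/\ f1 \in s, f2 \in s, f1 != f2, P f1 & P f2] /\
    (forall f, f \in s -> P f -> f = f1 \/ f = f2).
Proof.
move=> us; rewrite -size_filter.
have mf f : (f \in filter P s) = (f \in s) && P f by rewrite mem_filter andbC.
have := filter_uniq P us.
case: (filter P s) mf => [|f1 [|f2 [|f3 t]]] //= mf uf _.
have := mf f1; have := mf f2; rewrite !inE !eqxx orbT /= => /esym/andP[? ?] /esym/andP[? ?].
exists f1, f2; split; first by move: uf; rewrite inE andbT => ->.
by move=> f fs Pf; have := mf f; rewrite fs Pf !inE => /orP[] /eqP ->; [left | right].
Qed.

Lemma count_filter_predC (T : eqType) (p q : pred T) s :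
  count p s = count p (filter q s) + count p (filter (predC q) s).
Proof. by elim: s => //= x s ->; case: (q x) => /=; lia. Qed.

Lemma count_uniq_sub (T : eqType) (P : pred T) (s1 s2 : seq T) :
  uniq s1 -> {subset s1 <= s2} -> count P s1 <= count P s2.
Proof.
move=> u1 sub; rewrite -!size_filter; apply: uniq_leq_size; first by rewrite filter_uniq.
by move=> x; rewrite !mem_filter => /andP[-> /sub].
Qed.

Lemma cards3 (T : finType) (x y z : T) :
  x != y -> x != z -> y != z -> #|[set x; y; z]| = 3.
Proof.
move=> xy xz yz.
by rewrite -setUA !cardsU1 cards1 !inE (negbTE xy) (negbTE xz) (negbTE yz).
Qed.

Lemma card3_decomp (T : finType) (f : {set T}) x : #|f| = 3 -> x \in f ->
  exists y z, [/\ y != z, y != x, z != x & f = [set x; y; z]].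
Proof.
move=> f3 xf; have /cards2P[y [z [yz Ef]]] : #|f :\ x| == 2.
  by move: f3; rewrite (cardsD1 x f) xf add1n => -[->].
have : (y \in f :\ x) && (z \in f :\ x) by rewrite Ef !inE !eqxx orbT.
rewrite !inE => /andP[/andP[yx _] /andP[zx _]].
by exists y, z; split => //; rewrite -(setD1K xf) Ef setUA.
Qed.

Lemma card3_decomp2 (T : finType) (f : {set T}) x y :
  #|f| = 3 -> x \in f -> y \in f -> x != y ->
  exists z, [/\ z != x, z != y & f = [set x; y; z]].
Proof.
move=> f3 xf yf xy; have [y' [z' [yz yx zx Ef]]] := card3_decomp f3 xf.
move: yf; rewrite Ef !inE eq_sym (negbTE xy) /= => /orP[] /eqP Ey; subst y.
  by exists z'; split; rewrite // eq_sym.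
by exists y'; split => //; apply/setP => w; rewrite !inE orbAC.
Qed.

Lemma pair_in_set3 (T : finType) (a b c x y : T) :
  a != b -> a != c -> b != c -> x != y ->
  ((x \in [set a; b; c]) && (y \in [set a; b; c]) : nat) =
  (x \in [set a; b]) && (y \in [set a; b]) + (x \in [set a; c]) && (y \in [set a; c])
  + (x \in [set b; c]) && (y \in [set b; c]).
Proof.
rewrite !inE => ab ac bc xy.
have nboth (z p q : T) : p != q -> ~~ ((z == p) && (z == q)).
  by move=> pq; apply: contra pq => /andP[/eqP <- /eqP <-].
have nsame p : ~~ ((x == p) && (y == p)).
  by apply: contra xy => /andP[/eqP -> /eqP ->].
move: (nboth x _ _ ab) (nboth x _ _ ac) (nboth x _ _ bc) (nboth y _ _ ab) (nboth y _ _ ac)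
  (nboth y _ _ bc) (nsame a) (nsame b) (nsame c).
by case: (x == a); case: (x == b); case: (x == c); case: (y == a); case: (y == b);
  case: (y == c).
Qed.

Lemma set_neq_mem (T : finType) (A B : {set T}) x : x \in A -> x \notin B -> A != B.
Proof. by move=> xA; apply: contra => /eqP <-. Qed.

Lemma connect_forward_closed (T : finType) (R : rel T) (K : pred T) x y :
  (forall p q, K p -> R p q -> K q) -> K x -> connect R x y -> K y.
Proof.
move=> cl + /connectP[p pth ->]; elim: p x pth => [|z p IH] x //=.
by case/andP=> Rxz pth Kx; apply: IH pth (cl _ _ Kx Rxz).
Qed.

Lemma connect_first_step (T : finType) (R : rel T) x y :
  connect R x y -> x != y -> exists z, R x z.
Proof.
move=> /connectP[[|z p] /= pth ->]; first by rewrite eqxx.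
by case/andP: pth => Rxz _; exists z.
Qed.

Lemma connect_mono (T : finType) (R R' : rel T) :
  subrel R R' -> subrel (connect R) (connect R').
Proof. by move=> sub; apply: connect_sub => x y /sub; exact: connect1. Qed.

Lemma connect_bypass (T : finType) (R R' : rel T) w x y : x != w -> y != w ->
  (forall p q, p != w -> q != w -> R p q -> connect R' p q) ->
  (forall p q, p != w -> q != w -> R p w -> R w q -> connect R' p q) ->
  connect R x y -> connect R' x y.
Proof.
move=> xw yw step detour /connectP[p pth Ey]; subst y.
suff: forall z, path R z p -> (z != w -> connect R' x z) ->
    (z == w -> exists2 q, q != w & R q w /\ connect R' x q) ->
    last z p != w -> connect R' x (last z p).
  by move/(_ x pth (fun _ => connect0 _ _)); apply=> //; rewrite (negbTE xw).
clear yw; elim: p {pth} => [|z' s IH] z /=; first by move=> _ h _ /h.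
case/andP=> Rzz' pth hz hw; apply: IH pth _ _.
- move=> z'w; have [zw|zw] := eqVneq z w.
    case: (hw (introT eqP zw)) => q qw [Rqw cq]; rewrite zw in Rzz'.
    exact: connect_trans cq (detour _ _ qw z'w Rqw Rzz').
  exact: connect_trans (hz zw) (step _ _ zw z'w Rzz').
- move/eqP=> z'w; rewrite z'w in Rzz'; have [zw|zw] := eqVneq z w; first exact/hw/eqP.
  by exists z => //; split => //; apply: hz.
Qed.

Lemma connect_restrict (T : finType) (R R' : rel T) x z :
  (forall y q, connect R' x y -> R' y q -> R y q) -> connect R' x z -> connect R x z.
Proof.
move=> H /connectP[p pth ->]; elim/last_ind: p pth => [|p q IH] //=.
rewrite rcons_path last_rcons => /andP[pp st].
apply: connect_trans (IH pp) (connect1 _); apply: H st.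
by apply/connectP; exists p.
Qed.

Section Triangulation.
Variables (V : finType) (Vs : {set V}) (e : rel V) (Fs : seq {set V}).
Hypothesis Ht : is_triang Vs e Fs.

Lemma triang_sym : symmetric e.
Proof. by case: Ht. Qed.

Lemma triang_irr x : ~~ e x x.
Proof. by case: Ht => _ []. Qed.

Lemma edge_neq x y : e x y -> x != y.
Proof. by apply: contraTneq => ->; exact: triang_irr. Qed.

Lemma edge_Vs x y : e x y -> (x \in Vs) && (y \in Vs).
Proof. by case: Ht => _ [_ [+ _]]; apply. Qed.

Lemma uniq_faces : uniq Fs.
Proof. by case: Ht => _ [_ [_ []]]. Qed.

Lemma faces_neq_nil : Fs != [::].
Proof. by case: Ht => _ [_ [_ [_ []]]]. Qed.

Lemma face_card f : f \in Fs -> #|f| = 3.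
Proof. by case: Ht => _ [_ [_ [_ [_ [/(_ f) H _]]]]] /H []. Qed.

Lemma face_edge f x y : f \in Fs -> x \in f -> y \in f -> x != y -> e x y.
Proof. by case: Ht => _ [_ [_ [_ [_ [/(_ f) H _]]]]] /H [_]; apply. Qed.

Lemma face_Vs f x : f \in Fs -> x \in f -> x \in Vs.
Proof.
move=> fF xf; have [y [z [_ yx _ Ef]]] := card3_decomp (face_card fF) xf.
have yf : y \in f by rewrite Ef !inE eqxx orbT.
have xy : x != y by rewrite eq_sym.
by case/andP: (edge_Vs (face_edge fF xf yf xy)).
Qed.

Lemma edge_count x y : e x y -> count (fun f : {set V} => (x \in f) && (y \in f)) Fs = 2.
Proof. by case: Ht => _ [_ [_ [_ [_ [_ [H _]]]]]]; apply: H. Qed.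

Lemma edge_two_faces x y : e x y ->
  exists f1 f2, [/\ f1 \in Fs, f2 \in Fs, f1 != f2,
    (x \in f1) && (y \in f1) & (x \in f2) && (y \in f2)] /\
  (forall f, f \in Fs -> (x \in f) && (y \in f) -> f = f1 \/ f = f2).
Proof.
by move=> exy; apply: count_eq2P uniq_faces (edge_count exy).
Qed.

Lemma link_connect v x y : v \in Vs -> e v x -> e v y -> connect (link e Fs v) x y.
Proof. by case: Ht => _ [_ [_ [_ [_ [_ [_ [H _]]]]]]] vVs; apply: H. Qed.

Lemma triang_connect x y : x \in Vs -> y \in Vs -> connect e x y.
Proof. by case: Ht => _ [_ [_ [_ [_ [_ [_ [_]]]]]]]; apply. Qed.

Lemma exists_neighbour v : v \in Vs -> exists a, e v a.
Proof.
move=> vVs; have := faces_neq_nil.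
case E: Fs => [//|f s] _; have fF : f \in Fs by rewrite E mem_head.
have [x xf] : exists x, x \in f by apply/card_gt0P; rewrite (face_card fF).
have [y [z [yz _ _ Ef]]] := card3_decomp (face_card fF) xf.
have [u uf uv] : exists2 u, u \in f & v != u.
  by case: (eqVneq v y) => [vy|]; [exists z; rewrite ?vy // Ef !inE eqxx !orbT | exists y;
    rewrite // Ef !inE eqxx orbT].
exact: connect_first_step (triang_connect vVs (face_Vs fF uf)) uv.
Qed.

(* Every edge lies on exactly two faces, so a face through an edge that is
   already covered twice by a family of faces belongs to that family. *)
Lemma face_mem_of_edge (L : seq {set V}) f x y : uniq L -> {subset L <= Fs} ->
  2 <= count (fun g : {set V} => (x \in g) && (y \in g)) L ->
  f \in Fs -> x \in f -> y \in f -> x != y -> f \in L.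
Proof.
move=> uL LF cL fF xf yf xy; apply: contraT => fL.
have uf : uniq (f :: L) by rewrite /= fL uL.
have sf : {subset f :: L <= Fs} by move=> g; rewrite inE => /predU1P[-> | /LF].
have := count_uniq_sub (fun g : {set V} => (x \in g) && (y \in g)) uf sf.
by rewrite (edge_count (face_edge fF xf yf xy)) /= xf yf /=; move: cL; lia.
Qed.

(* The link at [x] is connected, so once one neighbour of [x] lies in [K],
   every neighbour of [x] does; connectivity of the graph then spreads [K]. *)
Lemma face_closed_sub (K : {set V}) x0 : x0 \in K -> x0 \in Vs ->
  (forall x, x \in K -> exists2 z, z \in K & e x z) ->
  (forall f x y, f \in Fs -> x \in K -> y \in K -> x != y -> x \in f -> y \in f ->
     f \subset K) ->
  Vs \subset K.
Proof.
move=> x0K x0Vs nbK faceK.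
have edgeK x y : x \in K -> e x y -> y \in K.
  move=> xK exy; have [z zK exz] := nbK x xK.
  have /andP[xVs _] := edge_Vs exy.
  apply: connect_forward_closed _ zK (link_connect xVs exz exy) => p q pK.
  case/and4P=> exp _ _ fF; apply: (subsetP (faceK _ x p fF xK pK (edge_neq exp) _ _));
    by rewrite !inE eqxx ?orbT.
apply/subsetP => x xVs.
exact: connect_forward_closed edgeK x0K (triang_connect x0Vs xVs).
Qed.

Lemma card_edges_le : #|[set p : V * V | e p.1 p.2]| <= #|Vs| * #|Vs| - #|Vs|.
Proof.
pose D := [set (z, z) | z in Vs].
have cD : #|D| = #|Vs| by rewrite card_imset // => x y [].
have DVV : D \subset setX Vs Vs.
  by apply/subsetP => p /imsetP[z zVs ->]; rewrite in_setX zVs.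
have sub : [set p : V * V | e p.1 p.2] \subset setX Vs Vs :\: D.
  apply/subsetP => -[x y]; rewrite !inE /= => exy; rewrite edge_Vs //=.
  by rewrite andbT; apply: contraNN (edge_neq exy) => /imsetP[z _ [-> ->]].
by apply: leq_trans (subset_leq_card sub) _; rewrite cardsD (setIidPr DVV) cardsX cD.
Qed.

End Triangulation.

Section DegreeThree.
Variables (V : finType) (Vs : {set V}) (e : rel V) (Fs : seq {set V}).
Hypothesis Ht : is_triang Vs e Fs.
Variables (v a b c : V).
Hypotheses (vVs : v \in Vs) (ab : a != b) (ac : a != c) (bc : b != c).
Hypothesis Nv : nbhd e v = [set a; b; c].
Hypotheses (Fab : [set v; a; b] \in Fs) (Fac : [set v; a; c] \in Fs)
  (Fbc : [set v; b; c] \in Fs).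

Lemma deg3_adjE x : e v x = (x \in [set a; b; c]).
Proof. by rewrite -Nv inE. Qed.

Let eva : e v a. Proof. by rewrite deg3_adjE !inE eqxx. Qed.
Let evb : e v b. Proof. by rewrite deg3_adjE !inE eqxx orbT. Qed.
Let evc : e v c. Proof. by rewrite deg3_adjE !inE eqxx !orbT. Qed.

Let neqE :
  ((a == b) = false) * ((a == c) = false) * ((b == c) = false) *
  ((b == a) = false) * ((c == a) = false) * ((c == b) = false) *
  ((v == a) = false) * ((v == b) = false) * ((v == c) = false) *
  ((a == v) = false) * ((b == v) = false) * ((c == v) = false).
Proof.
have va := edge_neq Ht eva; have vb := edge_neq Ht evb; have vc := edge_neq Ht evc.
rewrite -!(eq_sym v) -(eq_sym a b) -(eq_sym a c) -(eq_sym b c).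
by rewrite !(negbTE ab, negbTE ac, negbTE bc, negbTE va, negbTE vb, negbTE vc).
Qed.

Lemma deg3_triangle p q : p \in [set a; b; c] -> q \in [set a; b; c] -> p != q -> e p q.
Proof.
move=> pabc qabc pq.
have [f [fF pf qf]] : exists f, [/\ f \in Fs, p \in f & q \in f].
  move: pabc qabc pq; rewrite !inE -!orbA.
  by case/or3P=> /eqP-> /or3P[] /eqP-> //; rewrite ?eqxx // => _;
    [exists [set v; a; b] | exists [set v; a; c] | exists [set v; a; b]
    | exists [set v; b; c] | exists [set v; a; c] | exists [set v; b; c]];
    rewrite !inE !eqxx ?orbT.
exact: (face_edge Ht) fF pf qf pq.
Qed.

Lemma deg3_faces_at f : f \in Fs -> v \in f ->
  [\/ f = [set v; a; b], f = [set v; a; c] | f = [set v; b; c]].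
Proof.
move=> fF vf; have [x [y [xy xv yv Ef]]] := card3_decomp (face_card Ht fF) vf.
have abcf z : z \in f -> z != v -> z \in [set a; b; c].
  by move=> zf zv; rewrite -deg3_adjE (face_edge Ht fF vf zf) // eq_sym.
have hx : x \in [set a; b; c] by apply: abcf; rewrite // Ef !inE eqxx orbT.
have hy : y \in [set a; b; c] by apply: abcf; rewrite // Ef !inE eqxx !orbT.
rewrite !inE -!orbA in hx hy.
by case/or3P: hx => /eqP Ex; case/or3P: hy => /eqP Ey; subst x y; rewrite ?eqxx // in xy;
  [apply: Or31 | apply: Or32 | apply: Or31 | apply: Or33 | apply: Or32 | apply: Or33];
  rewrite Ef; apply/setP => z; rewrite !inE // orbAC.
Qed.

(* With the face [abc] the star of [v] closes up into a tetrahedron, which then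
   is the whole surface: a sphere. *)
Lemma deg3_K4_genus0 : [set a; b; c] \in Fs -> euler_genus Vs e Fs = 0.
Proof.
move=> Fabc; set K := [set v; a; b; c].
set L := [:: [set v; a; b]; [set v; a; c]; [set v; b; c]; [set a; b; c]].
have LF : {subset L <= Fs} by move=> f; rewrite !inE => /or4P[] /eqP->.
have uL : uniq L.
  rewrite /= !inE !negb_or !andbT; repeat (apply/andP; split);
  first [ by apply: (set_neq_mem (x := v)); rewrite !inE ?eqxx ?neqE
        | by apply: (set_neq_mem (x := a)); rewrite !inE ?eqxx ?neqE
        | by apply: (set_neq_mem (x := b)); rewrite !inE ?eqxx ?neqE ].
have LK f : f \in L -> f \subset K.
  by rewrite !inE => /or4P[] /eqP-> ; apply/subsetP => z; rewrite !inE;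
    case/orP=> [/orP[]|] /eqP ->; rewrite eqxx ?orbT.
have countL x y : x \in K -> y \in K -> x != y ->
    2 <= count (fun f : {set V} => (x \in f) && (y \in f)) L.
  by rewrite !inE -!orbA => /or4P[] /eqP-> /or4P[] /eqP->;
    rewrite ?eqxx //= !inE ?neqE ?eqxx.
have faceK f x y : f \in Fs -> x \in K -> y \in K -> x != y -> x \in f -> y \in f ->
    f \subset K.
  by move=> fF xK yK xy xf yf; apply/LK/(face_mem_of_edge Ht uL LF (countL _ _ xK yK xy)).
have VsK : Vs \subset K.
  have vK : v \in K by rewrite !inE eqxx.
  apply: (face_closed_sub Ht vK vVs) faceK => x xK.
  have [->|xv] := eqVneq x v; first by exists a; rewrite ?inE ?eqxx ?orbT.
  exists v; first by rewrite !inE eqxx.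
  by rewrite (triang_sym Ht) deg3_adjE; move: xK; rewrite !inE (negbTE xv) -!orbA.
have KVs : K \subset Vs.
  have adjVs x : e v x -> x \in Vs by move/(edge_Vs Ht)/andP => [].
  by apply/subsetP => z; rewrite !inE -!orbA => /or4P[] /eqP-> //; exact: adjVs.
have cVs : #|Vs| = 4.
  rewrite (_ : Vs = K); last by apply/eqP; rewrite eqEsubset VsK KVs.
  by rewrite /K -!setUA !cardsU1 cards1 !inE !neqE.
have nE : nedges e <= 6.
  by rewrite /nedges; apply: leq_trans (leq_div2r 2 (card_edges_le Ht)) _; rewrite cVs.
have sF : 4 <= size Fs := uniq_leq_size uL LF.
by rewrite /euler_genus cVs; move: (nedges e) (size Fs) nE sF => m n; clear; lia.
Qed.

Lemma deg3_face_at_noa f : f \in Fs -> v \in f -> a \notin f -> f = [set v; b; c].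
Proof. by move=> fF vf; case: (deg3_faces_at fF vf) => -> //; rewrite !inE eqxx orbT. Qed.

Lemma perm_deg3_faces_at :
  perm_eq [seq f : {set V} <- Fs | v \in f] [:: [set v; a; b]; [set v; a; c]; [set v; b; c]].
Proof.
apply: uniq_perm; first exact/filter_uniq/(uniq_faces Ht).
  rewrite /= !inE !negb_or !andbT.
  by rewrite (set_neq_mem (x := b)) ?(set_neq_mem (x := a)) // !inE ?eqxx ?neqE.
move=> f; rewrite mem_filter; apply/andP/idP => [[vf fF]|].
  by rewrite !inE; case: (deg3_faces_at fF vf) => ->; rewrite eqxx ?orbT.
by rewrite !inE => /or3P[] /eqP->; rewrite !inE eqxx.
Qed.

Lemma deg3_mapw : mapw a v [set v; b; c] = [set a; b; c].
Proof.
rewrite /mapw !inE eqxx; apply/setP => x; rewrite !inE.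
by case: (eqVneq x v) => [->|] /=; rewrite ?neqE ?orbA.
Qed.

Lemma deg3_mem_contract_F f :
  (f \in contract_F Fs a v) = ((f \in Fs) && (v \notin f)) || (f == [set a; b; c]).
Proof.
apply/mapP/idP => [[g] | ].
  rewrite mem_filter negb_and => /andP[ag gF] ->.
  case: (boolP (v \in g)) => vg; last by rewrite /mapw (negbTE vg) gF vg.
  by move: ag; rewrite vg orbF => ag; rewrite (deg3_face_at_noa gF vg ag) deg3_mapw eqxx orbT.
case/orP=> [/andP[fF vf] | /eqP->].
  by exists f; rewrite ?mem_filter ?fF /mapw (negbTE vf) ?andbF.
by exists [set v; b; c]; rewrite ?deg3_mapw // mem_filter Fbc !inE !neqE.
Qed.

Lemma deg3_contract_eE x y : contract_e e a v x y = [&& x != v, y != v & e x y].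
Proof.
rewrite /contract_e; case: (eqVneq x v) => //= xv; case: (eqVneq y v) => //= yv.
apply/idP/idP => [/andP[xy /or3P[// | /andP[/eqP Ex vy] | /andP[/eqP Ey vx]]] | exy].
- by subst x; apply: deg3_triangle; rewrite -?deg3_adjE // !inE eqxx.
- by subst y; apply: deg3_triangle; rewrite -?deg3_adjE // !inE eqxx.
- by rewrite exy orTb andbT; exact: (edge_neq Ht exy).
Qed.

(* The faces through [v] lose [vab] and [vac] and turn [vbc] into [abc]; for an
   edge [xy] avoiding [v] this trades the faces among [vab], [vac], [vbc] through
   [xy] for [abc], which contains [xy] exactly when one of them does. *)
Lemma deg3_count_contract_F x y : contract_e e a v x y ->
  count (fun f : {set V} => (x \in f) && (y \in f)) (contract_F Fs a v) = 2.
Proof.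
rewrite deg3_contract_eE => /and3P[xv yv exy].
rewrite -(edge_count Ht exy) /contract_F count_map count_filter.
set P := fun f : {set V} => (x \in f) && (y \in f).
rewrite (count_filter_predC _ (fun f : {set V} => v \in f)).
rewrite [in RHS](count_filter_predC _ (fun f : {set V} => v \in f)).
congr (_ + _); last first.
  apply: eq_in_count => f; rewrite mem_filter /= => /andP[vf _].
  by rewrite /mapw (negbTE vf) andbF andbT.
rewrite !(permP perm_deg3_faces_at) /= deg3_mapw /P !inE !eqxx !neqE /=.
rewrite (negbTE xv) (negbTE yv) !andbF andbT /= !addn0 !add0n addnA.
by have := pair_in_set3 ab ac bc (edge_neq Ht exy); rewrite !inE.
Qed.

Section Contraction.
Hypothesis Fabc : [set a; b; c] \notin Fs.

Lemma deg3_uniq_contract_F : uniq (contract_F Fs a v).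
Proof.
have mapwE g : g \in Fs -> ~~ ((a \in g) && (v \in g)) ->
    (g = [set v; b; c]) \/ (mapw a v g = g /\ v \notin g).
  move=> gF; rewrite negb_and; case: (boolP (v \in g)) => vg.
    by rewrite orbF => ag; left; exact: deg3_face_at_noa.
  by rewrite /mapw (negbTE vg); right.
rewrite map_inj_in_uniq ?filter_uniq ?(uniq_faces Ht) // => f g.
rewrite !mem_filter => /andP[nf fF] /andP[ng gF].
case: (mapwE f fF nf) => [->|[-> vf]]; case: (mapwE g gF ng) => [->|[-> vg]] //;
  rewrite deg3_mapw => E; move: Fabc; by [rewrite E gF | rewrite -E fF].
Qed.

Lemma deg3_contract_link u p q : u \in Vs :\ v ->
  contract_e e a v u p -> contract_e e a v u q ->
  connect (link (contract_e e a v) (contract_F Fs a v) u) p q.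
Proof.
rewrite in_setD1 !deg3_contract_eE => /andP[uv uVs] /and3P[_ pv eup] /and3P[_ qv euq].
apply: (connect_bypass (w := v) (R := link e Fs u)) pv qv _ _ (link_connect Ht uVs eup euq).
  move=> p' q' p'v q'v /and4P[eup' euq' pq' fF]; apply: connect1.
  rewrite /link !deg3_contract_eE uv p'v q'v eup' euq' pq' deg3_mem_contract_F fF /=.
  by rewrite !inE !(eq_sym v) (negbTE uv) (negbTE p'v) (negbTE q'v).
move=> p' q' p'v q'v /and4P[eup' euv _ F1] /and4P[_ euq' _ F2].
have [->|pq] := eqVneq p' q'; first exact: connect0.
apply: connect1; rewrite /link !deg3_contract_eE uv p'v q'v eup' euq' pq.
rewrite deg3_mem_contract_F /=; apply/orP; right.
have abcE z f : f \in Fs -> v \in f -> z \in f -> z != v -> z \in [set a; b; c].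
  by move=> fF vf zf zv; rewrite -deg3_adjE (face_edge Ht fF vf zf) // eq_sym.
have up : u \in [set a; b; c] by rewrite -deg3_adjE (triang_sym Ht).
have pp : p' \in [set a; b; c] by apply: (abcE _ _ F1); rewrite // !inE eqxx ?orbT.
have qq : q' \in [set a; b; c] by apply: (abcE _ _ F2); rewrite // !inE eqxx ?orbT.
rewrite eqEcard (cards3 (edge_neq Ht eup') (edge_neq Ht euq') pq) cards3 // leqnn andbT.
by rewrite !subUset !sub1set up pp qq.
Qed.

Lemma deg3_contract_triang : is_triang (Vs :\ v) (contract_e e a v) (contract_F Fs a v).
Proof.
split; [|split; [|split; [|split; [|split; [|split; [|split; [|split]]]]]]].
- by move=> x y; rewrite !deg3_contract_eE (triang_sym Ht) andbCA.
- by move=> x; rewrite deg3_contract_eE (negbTE (triang_irr Ht x)) !andbF.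
- move=> x y; rewrite deg3_contract_eE !in_setD1 => /and3P[-> -> /(edge_Vs Ht)].
  by case/andP=> -> ->.
- exact: deg3_uniq_contract_F.
- by apply/eqP => E; have := deg3_mem_contract_F [set a; b; c]; rewrite E eqxx orbT.
- move=> f; rewrite deg3_mem_contract_F => /orP[/andP[fF vf] | /eqP->].
    split=> [|x y xf yf xy]; first exact: (face_card Ht fF).
    rewrite deg3_contract_eE (face_edge Ht fF xf yf xy) andbT.
    by apply/andP; split; apply: contraNneq vf => <-.
  split=> [|x y xabc yabc xy]; first exact: cards3.
  rewrite deg3_contract_eE deg3_triangle // andbT.
  rewrite -!deg3_adjE in xabc yabc.
  by rewrite !(eq_sym _ v) (edge_neq Ht xabc) (edge_neq Ht yabc).
- exact: deg3_count_contract_F.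
- by move=> u uVs p q; apply: deg3_contract_link.
- move=> x y; rewrite !in_setD1 => /andP[xv xVs] /andP[yv yVs].
  apply: (connect_bypass (w := v) (R := e)) xv yv _ _ (triang_connect Ht xVs yVs).
    by move=> p q pv qv epq; apply: connect1; rewrite deg3_contract_eE pv qv.
  move=> p q pv qv epv evq; have [->|pq] := eqVneq p q; first exact: connect0.
  apply: connect1; rewrite deg3_contract_eE pv qv deg3_triangle // -deg3_adjE //.
  by rewrite (triang_sym Ht).
Qed.

End Contraction.

Lemma deg3_contra : irreducible Vs e Fs -> 1 <= euler_genus Vs e Fs -> False.
Proof.
move=> irr genus; case: (boolP ([set a; b; c] \in Fs)) => [/deg3_K4_genus0 | Fabc].
  by move=> g0; rewrite g0 in genus.
by apply: (irr a v); [rewrite (triang_sym Ht) | exact: deg3_contract_triang].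
Qed.

End DegreeThree.

Section MinimumDegree.
Variables (V : finType) (Vs : {set V}) (e : rel V) (Fs : seq {set V}).
Hypothesis Ht : is_triang Vs e Fs.

(* Around an edge [va] sit two faces [vab] and [vac]; if [v] has no further
   neighbour, the second face through [vb] must be [vbc]. *)
Lemma deg_le3_faces v : v \in Vs -> deg e v <= 3 ->
  exists a b c, [/\ a != b, a != c, b != c, nbhd e v = [set a; b; c] &
    [/\ [set v; a; b] \in Fs, [set v; a; c] \in Fs & [set v; b; c] \in Fs]].
Proof.
move=> vVs dv3; have [a eva] := exists_neighbour Ht vVs; have va := edge_neq Ht eva.
have [f1 [f2 [[f1F f2F f12 /andP[vf1 af1] /andP[vf2 af2]] _]]] := edge_two_faces Ht eva.
have [b [bv ba E1]] := card3_decomp2 (face_card Ht f1F) vf1 af1 va.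
have [c [cv ca E2]] := card3_decomp2 (face_card Ht f2F) vf2 af2 va.
have bc : b != c by apply: contraNneq f12 => bc; rewrite E1 E2 bc.
have evx x f : f \in Fs -> v \in f -> x \in f -> x != v -> e v x.
  by move=> fF vf xf xv; apply: (face_edge Ht fF vf xf); rewrite eq_sym.
have evb : e v b by apply: (evx b f1); rewrite // E1 !inE eqxx !orbT.
have evc : e v c by apply: (evx c f2); rewrite // E2 !inE eqxx !orbT.
have Nv : nbhd e v = [set a; b; c].
  apply/eqP; rewrite eq_sym eqEcard (cards3 _ _ bc) ?(eq_sym a) // dv3 andbT.
  by rewrite !subUset !sub1set !inE eva evb evc.
have [g1 [g2 [[g1F g2F g12 /andP[vg1 bg1] /andP[vg2 bg2]] _]]] := edge_two_faces Ht evb.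
have [g [gF gf1 vg bg]] : exists g, [/\ g \in Fs, g != f1, v \in g & b \in g].
  by case: (eqVneq g1 f1) => [Eg|]; [exists g2; rewrite -Eg eq_sym | exists g1].
have [z [zv zb Eg]] := card3_decomp2 (face_card Ht gF) vg bg (edge_neq Ht evb).
have : z \in nbhd e v by rewrite inE (evx z g) // Eg !inE eqxx !orbT.
rewrite Nv !inE -!orbA (negbTE zb) /= => /orP[] /eqP Ez; subst z.
  move: gf1; rewrite Eg E1 (_ : [set v; b; a] = [set v; a; b]) ?eqxx //.
  by apply/setP => x; rewrite !inE orbAC.
exists a, b, c; split; rewrite // 1?eq_sym //.
by split; rewrite -?E1 -?E2 -?Eg.
Qed.

Theorem irreducible_deg_ge4 v : irreducible Vs e Fs -> 1 <= euler_genus Vs e Fs ->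
  v \in Vs -> 4 <= deg e v.
Proof.
move=> irr genus vVs; rewrite leqNgt ltnS; apply/negP => /(deg_le3_faces vVs).
case=> a [b [c [ab ac bc Nv [Fab Fac Fbc]]]].
exact: (deg3_contra Ht vVs ab ac bc Nv Fab Fac Fbc irr genus).
Qed.

End MinimumDegree.

Section Components.
Variable V : finType.
Implicit Types (X Y : subgraph V) (x y z : V).

Lemma mem_sgcomp1 X x z : (z \in (sgcomp X x).1) = (z \in X.1) && connect (sgrel X) x z.
Proof. by rewrite inE. Qed.

Lemma mem_sgcomp2 X x p : (p \in (sgcomp X x).2) = (p \in X.2) && connect (sgrel X) x p.1.
Proof. by rewrite inE. Qed.

Lemma sgcomp_eq X x y :
  symmetric (sgrel X) -> connect (sgrel X) x y -> sgcomp X x = sgcomp X y.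
Proof.
move=> sym cxy; have E z : connect (sgrel X) x z = connect (sgrel X) y z.
  apply/idP/idP => [|/(connect_trans cxy)] //.
  by apply: connect_trans; rewrite (sym_connect_sym sym).
by rewrite /sgcomp; congr pair; apply/setP => z; rewrite !inE E.
Qed.

Lemma sgcomp1_share X y0 y z w : symmetric (sgrel X) ->
  z \in (sgcomp X y0).1 -> z \in (sgcomp X y).1 -> w \in (sgcomp X y).1 ->
  w \in (sgcomp X y0).1.
Proof.
move=> sym; rewrite !mem_sgcomp1 => /andP[_ c0] /andP[_ c] /andP[-> cw] /=.
by apply: connect_trans c0 (connect_trans _ cw); rewrite (sym_connect_sym sym).
Qed.

Lemma sgcomp1S X Y x : X.1 \subset Y.1 -> X.2 \subset Y.2 ->
  (sgcomp X x).1 \subset (sgcomp Y x).1.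
Proof.
move=> /subsetP s1 /subsetP s2; apply/subsetP => z; rewrite !mem_sgcomp1.
by case/andP=> /s1 -> /=; apply: connect_mono => p q /s2.
Qed.

End Components.

Section SubgraphH.
Variables (V : finType) (e : rel V) (S : {set V}).
Implicit Types (i j : nat) (u w z : V).

Lemma Hsg1P i z :
  reflect (exists2 w, w \in hatS e S i & z \in cnbhd e w) (z \in (Hsg e S i).1).
Proof. exact: bigcupP. Qed.

Lemma Hsg2P i p :
  reflect (exists2 w, w \in hatS e S i & p \in (Gv e w).2) (p \in (Hsg e S i).2).
Proof. exact: bigcupP. Qed.

Lemma mem_Gv2 u (p : V * V) :
  (p \in (Gv e u).2) = [&& p.1 \in cnbhd e u, p.2 \in cnbhd e u & e p.1 p.2].
Proof. by rewrite inE. Qed.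

Lemma Hsg_sym i : symmetric e -> symmetric (sgrel (Hsg e S i)).
Proof.
move=> esym x y; rewrite /sgrel.
by apply/Hsg2P/Hsg2P => -[w wS pw]; exists w => //; move: pw; rewrite !mem_Gv2 /= esym andbCA.
Qed.

Lemma Hsg_edge i (p : V * V) :
  p \in (Hsg e S i).2 -> (p.1 \in (Hsg e S i).1) && (p.2 \in (Hsg e S i).1).
Proof.
case/Hsg2P => w wS; rewrite mem_Gv2 => /and3P[p1 p2 _].
by apply/andP; split; apply/Hsg1P; exists w.
Qed.

Lemma Hsg_connect_cnbhd i u z :
  u \in hatS e S i -> z \in cnbhd e u -> connect (sgrel (Hsg e S i)) u z.
Proof.
move=> uS; rewrite in_setU1 inE => /predU1P[->|euz]; first exact: connect0.
by apply: connect1; apply/Hsg2P; exists u; rewrite // mem_Gv2 /= !inE eqxx euz orbT.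
Qed.

Lemma hatS_sub i : hatS e S i \subset S.
Proof. by apply/subsetP => u; rewrite inE => /andP[]. Qed.

Lemma hatS_mono i j : i <= j -> hatS e S i \subset hatS e S j.
Proof.
move=> ij; apply/subsetP => u; rewrite !inE => /and3P[-> -> /leq_trans]; exact.
Qed.

Lemma hatS_Hsg1 i u : u \in hatS e S i -> u \in (Hsg e S i).1.
Proof. by move=> uS; apply/Hsg1P; exists u; rewrite ?setU11. Qed.

Lemma Hsg1S i j : i <= j -> (Hsg e S i).1 \subset (Hsg e S j).1.
Proof.
move/hatS_mono/subsetP=> sub; apply/subsetP => z /Hsg1P[w /sub wS zw].
by apply/Hsg1P; exists w.
Qed.

Lemma Hsg2S i j : i <= j -> (Hsg e S i).2 \subset (Hsg e S j).2.
Proof.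
move/hatS_mono/subsetP=> sub; apply/subsetP => p /Hsg2P[w /sub wS pw].
by apply/Hsg2P; exists w.
Qed.

Lemma sgcomp_Hsg1S i j x : i <= j ->
  (sgcomp (Hsg e S i) x).1 \subset (sgcomp (Hsg e S j) x).1.
Proof. by move=> ij; apply: sgcomp1S; [exact: Hsg1S | exact: Hsg2S]. Qed.

End SubgraphH.

Definition represents_comps (V : finType) (e : rel V) (S : {set V}) (t : btree V)
    (i : nat) : Prop :=
  forall x, x \in (Hsg e S i).1 -> exists2 y, is_subtree y t &
    [set z in leaves y] = hatS e S i :&: (sgcomp (Hsg e S i) x).1 /\
    Gt e y = sgcomp (Hsg e S i) x.

Lemma sgU1 (V : finType) (A B : subgraph V) : (sgU A B).1 = A.1 :|: B.1.
Proof. by []. Qed.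

Lemma sgU2 (V : finType) (A B : subgraph V) : (sgU A B).2 = A.2 :|: B.2.
Proof. by []. Qed.

Lemma sgUAC (V : finType) (A B C : subgraph V) : sgU (sgU A B) C = sgU A (sgU C B).
Proof. by rewrite /sgU /= (setUC C.1) (setUC C.2) !setUA. Qed.

Definition sgcomps (V : finType) (X : subgraph V) (Y : {set V}) : subgraph V :=
  (\bigcup_(y in Y) (sgcomp X y).1, \bigcup_(y in Y) (sgcomp X y).2).

Lemma sgcompsU1 (V : finType) (X : subgraph V) y (Y : {set V}) :
  sgcomps X (y |: Y) = sgU (sgcomp X y) (sgcomps X Y).
Proof. by rewrite /sgcomps !bigcup_setU !big_set1. Qed.

Lemma sgcomps1P (V : finType) (X : subgraph V) (Y : {set V}) z :
  reflect (exists2 y, y \in Y & z \in (sgcomp X y).1) (z \in (sgcomps X Y).1).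
Proof. exact: bigcupP. Qed.

Lemma sgcomps2P (V : finType) (X : subgraph V) (Y : {set V}) p :
  reflect (exists2 y, y \in Y & p \in (sgcomp X y).2) (p \in (sgcomps X Y).2).
Proof. exact: bigcupP. Qed.

Section Extension.
Variables (V : finType) (e : rel V) (S : {set V}) (T : btree V) (v : V).
Hypothesis esym : symmetric e.
Let d := deg e v.
Let H := Hsg e S d.
Hypotheses (d4 : 4 <= d) (d9 : d <= 9).
Hypothesis vH : v \notin H.1.
Hypothesis Hcap : forall x, x \in H.1 -> #|nbhd e v :&: (sgcomp H x).1| <= 2.
Hypotheses (Trep : tree_rep e T) (Tuniq : uniq (leaves T)) (Tleaves : [set u in leaves T] = S).
Hypothesis Tnodes : forall j, 4 <= j <= 9 -> represents_comps e S T j.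

Let symH : symmetric (sgrel H) := Hsg_sym S d esym.

Lemma ext_v_ncomp y : v \notin (sgcomp H y).1.
Proof. by rewrite mem_sgcomp1 (negbTE vH). Qed.

Lemma ext_hatS_nadj w : w \in hatS e S d -> (w != v) && ~~ e v w.
Proof.
move=> wS; apply/andP; split; first by apply: contraNneq vH => <-; exact: hatS_Hsg1.
by apply: contraNN vH => evw; apply/Hsg1P; exists w; rewrite // !inE esym evw orbT.
Qed.

Let S' := v |: hatS e S d.

Lemma ext_hatS_lt j : j < d -> hatS e S' j = hatS e S j.
Proof.
move=> jd; apply/setP => u; rewrite !inE; case: (eqVneq u v) => [->|uv] /=.
  by rewrite [deg e v <= j]leqNgt jd !andbF.
case: (u \in S) (4 <= deg e u) => [] [] //=.
by apply/andP/idP => [[]//|uj]; split=> //; exact: leq_trans uj (ltnW jd).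
Qed.

Lemma ext_hatS_ge j : d <= j -> hatS e S' j = S'.
Proof.
move=> dj; apply/setP => u; rewrite !inE; case: (eqVneq u v) => [->|uv] /=.
  by rewrite -/d d4 dj.
case: (u \in S) (4 <= deg e u) => [] [] //=.
by apply/andP/idP => [[]//|ud]; split=> //; exact: leq_trans ud dj.
Qed.

Let H' := Hsg e S' d.

Lemma ext_Hsg_ge j : d <= j -> Hsg e S' j = sgU (Gv e v) H.
Proof. by move=> dj; rewrite /Hsg ext_hatS_ge // /S' !bigcup_setU !big_set1. Qed.

Lemma ext_H'1 z : (z \in H'.1) = (z \in cnbhd e v) || (z \in H.1).
Proof. by rewrite /H' ext_Hsg_ge // sgU1 in_setU. Qed.

Lemma ext_H'2 p : (p \in H'.2) = (p \in (Gv e v).2) || (p \in H.2).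
Proof. by rewrite /H' ext_Hsg_ge // sgU2 in_setU. Qed.

Let symH' : symmetric (sgrel H') := Hsg_sym S' d esym.

Lemma ext_connH a b : connect (sgrel H) a b -> connect (sgrel H') a b.
Proof. by apply: connect_mono => p q; rewrite /sgrel ext_H'2 => ->; rewrite orbT. Qed.

Lemma ext_conn_v z : z \in cnbhd e v -> connect (sgrel H') v z.
Proof. by apply: Hsg_connect_cnbhd; rewrite !inE eqxx -/d d4 leqnn. Qed.

Definition star_spec (A : {set V}) (M : btree V) (Y : {set V}) : Prop :=
  [/\ tree_rep e M, uniq (leaves M), Y \subset nbhd e v :&: H.1,
      Gt e M = sgU (Gv e v) (sgcomps H Y) &
      [/\ [set u in leaves M] = v |: (hatS e S d :&: (sgcomps H Y).1),
          A :&: H.1 \subset (sgcomps H Y).1 &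
          forall y, y \in Y -> exists2 n, is_subtree n T &
            is_subtree n M /\ [set z in leaves n] = hatS e S d :&: (sgcomp H y).1]].

Lemma star_spec0 : star_spec set0 (Leaf v) set0.
Proof.
split; rewrite ?sub0set //; first by rewrite /= /sgcomps !big_set0 /sgU !setU0; case: (Gv e v).
split; [|by rewrite set0I sub0set | by move=> y; rewrite inE].
by apply/setP => u; rewrite /sgcomps /= big_set0 !inE andbF orbF.
Qed.

Lemma star_spec_skip A M Y y : ~~ ((y \in H.1) && (y \notin (sgcomps H Y).1)) ->
  star_spec A M Y -> star_spec (y |: A) M Y.
Proof.
move=> old [Mrep Muniq YN MG [Ml Mcov Mnodes]]; split=> //; split=> //.
rewrite setIUl subUset Mcov andbT; apply/subsetP => z; rewrite in_setI in_set1.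
by case/andP=> /eqP-> zH; move: old; rewrite zH negbK.
Qed.

(* The new component meets what hangs below [v] already only inside [N(v)], hence
   in at most two vertices. *)
Lemma star_spec_add A M Y y : y \in nbhd e v -> y \in H.1 -> y \notin (sgcomps H Y).1 ->
  star_spec A M Y -> exists M', star_spec (y |: A) M' (y |: Y).
Proof.
move=> yN yH yY [Mrep Muniq YN MG [Ml Mcov Mnodes]].
have [n nT [nl nG]] := Tnodes (introT andP (conj d4 d9)) yH.
have yy : y \in (sgcomp H y).1 by rewrite mem_sgcomp1 yH connect0.
have disj z : z \in (sgcomp H y).1 -> z \notin (sgcomps H Y).1.
  move=> zy; apply: contra yY => /sgcomps1P[y0 y0Y zy0]; apply/sgcomps1P.
  by exists y0 => //; exact: sgcomp1_share symH zy0 zy yy.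
have MG1 z : (z \in (Gt e M).1) = (z \in cnbhd e v) || (z \in (sgcomps H Y).1).
  by rewrite MG inE.
exists (Node M n); split.
- rewrite /= Mrep (subtree_tree_rep nT Trep) !andbT /compatible nG.
  apply: leq_trans (Hcap yH); apply/subset_leq_card/subsetP => z.
  rewrite !in_setI MG1 => /andP[/orP[zv|zY] zy]; last by rewrite (negbTE (disj z zy)) in zY.
  rewrite zy andbT; move: zv; rewrite in_setU1 => /predU1P[zv|//].
  by rewrite zv (negbTE (ext_v_ncomp y)) in zy.
- rewrite /= cat_uniq Muniq (subtree_uniq nT Tuniq) andbT /=.
  apply/hasPn => u; rewrite (mem_leaves_set u nl) (mem_leaves_set u Ml) in_setI.
  case/andP=> _ uy; rewrite in_setU1 in_setI negb_or negb_and (disj u uy) orbT andbT.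
  by apply: contraTneq uy => ->; exact: ext_v_ncomp.
- by rewrite subUset sub1set inE yN yH YN.
- by rewrite /= MG nG sgcompsU1 sgUAC.
split.
- apply/setP => u; rewrite [LHS]inE mem_cat (mem_leaves_set u Ml) (mem_leaves_set u nl).
  rewrite sgcompsU1 sgU1 !in_setU1 !in_setI in_setU.
  by case: (u == v); case: (u \in hatS e S d); case: (u \in (sgcomp _ _).1);
    case: (u \in (sgcomps _ _).1).
- rewrite setIUl sgcompsU1 sgU1 subUset (subset_trans Mcov (subsetUr _ _)) andbT.
  by apply/subsetP => z; rewrite in_setI in_set1 => /andP[/eqP-> _]; rewrite in_setU yy.
- move=> y0; rewrite in_setU1 => /predU1P[->|/Mnodes[n0 n0T [n0M n0l]]].
    by exists n => //; split => //; right; right; exact: subtree_refl.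
  by exists n0 => //; split => //; right; left.
Qed.

Lemma star_tree (ns : seq V) : {subset ns <= nbhd e v} ->
  exists M Y, star_spec [set z in ns] M Y.
Proof.
elim: ns => [_|y ns IH sub].
  exists (Leaf v), set0; rewrite (_ : [set z in [::]] = set0); first exact: star_spec0.
  by apply/setP => z; rewrite !inE.
have [M [Y MY]] := IH (fun z zns => sub z (mem_behead (zns : z \in behead (y :: ns)))).
rewrite (_ : [set z in y :: ns] = y |: [set z in ns]); last by apply/setP => z; rewrite !inE.
case: (boolP ((y \in H.1) && (y \notin (sgcomps H Y).1))) => [/andP[yH yY] | old].
  have [M' MY'] := star_spec_add (sub y (mem_head y ns)) yH yY MY.
  by exists M', (y |: Y).
by exists M, Y; exact: star_spec_skip.
Qed.

Section Grafting.
Variables (M : btree V) (Y : {set V}).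
Hypotheses (Mrep : tree_rep e M) (Muniq : uniq (leaves M))
  (YN : Y \subset nbhd e v :&: H.1) (MG : Gt e M = sgU (Gv e v) (sgcomps H Y))
  (Ml : [set u in leaves M] = v |: (hatS e S d :&: (sgcomps H Y).1))
  (Mcov : nbhd e v :&: H.1 \subset (sgcomps H Y).1)
  (Mnodes : forall y, y \in Y -> exists2 n, is_subtree n T &
     is_subtree n M /\ [set z in leaves n] = hatS e S d :&: (sgcomp H y).1).

Let keep u := (u \in hatS e S d) && (u \notin (Gt e M).1).
Let T' := graft (prune keep T) M.

Lemma ext_M1 z : (z \in (Gt e M).1) = (z \in cnbhd e v) || (z \in (sgcomps H Y).1).
Proof. by rewrite MG sgU1 in_setU. Qed.

Lemma ext_MH z : z \in (Gt e M).1 -> z \in H.1 -> z \in (sgcomps H Y).1.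
Proof.
move=> + zH; rewrite ext_M1 in_setU1 => /orP[/predU1P[zv|zN] | //].
  by move: vH; rewrite -zv zH.
by apply: (subsetP Mcov); rewrite in_setI zN.
Qed.

Lemma ext_kept_far u z : keep u -> z \in cnbhd e u -> z \notin (Gt e M).1.
Proof.
case/andP=> uS uM zu; apply: contra uM => zM.
have zH : z \in H.1 by apply/Hsg1P; exists u.
have /sgcomps1P[y0 y0Y zy0] := ext_MH zM zH.
rewrite ext_M1; apply/orP; right; apply/sgcomps1P; exists y0 => //.
apply: (sgcomp1_share symH zy0 (_ : z \in (sgcomp H u).1)).
  by rewrite mem_sgcomp1 zH Hsg_connect_cnbhd.
by rewrite mem_sgcomp1 hatS_Hsg1 // connect0.
Qed.

Lemma ext_tree_rep : tree_rep e T'.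
Proof.
rewrite /T'; case E: (prune keep T) => [r|] //=.
rewrite Mrep (prune_tree_rep Trep E) !andbT /compatible.
rewrite (_ : _ :&: _ = set0) ?cards0 //; apply/setP => z; rewrite !inE.
apply/negP => /andP[]; rewrite mem_Gt1 => /hasP[u ur zu].
have := prune_leaves keep T; rewrite E /= => Lr.
by rewrite Lr mem_filter in ur; case/andP: ur => ku _; rewrite (negbTE (ext_kept_far ku zu)).
Qed.

Lemma ext_leaves_uniq : uniq (leaves T').
Proof.
rewrite /T' leaves_graft cat_uniq Muniq prune_leaves filter_uniq //= andbT.
apply/hasPn => u uM; rewrite mem_filter negb_and; apply/orP; left.
by rewrite negb_and negbK (leaf_mem_Gt1 e uM) orbT.
Qed.

Lemma ext_leaves : [set u in leaves T'] = v |: hatS e S d.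
Proof.
apply/setP => u; rewrite inE /T' leaves_graft mem_cat prune_leaves mem_filter.
rewrite (mem_leaves_set u Ml) !in_setU1 in_setI.
rewrite /keep; case: (eqVneq u v) => [_|uv]; rewrite ?orbT // !orFb.
case uS: (u \in hatS e S d); rewrite ?andFb // !andTb.
case: (boolP (u \in (Gt e M).1)) => uM; first by rewrite (ext_MH uM (hatS_Hsg1 uS)) orbT.
by rewrite (mem_leaves_set u Tleaves) (subsetP (hatS_sub e S d)).
Qed.

Lemma ext_nodes_lt j : 4 <= j -> j < d -> represents_comps e S' T' j.
Proof.
move=> j4 jd; have HE : Hsg e S' j = Hsg e S j by rewrite /Hsg ext_hatS_lt.
rewrite /represents_comps HE ext_hatS_lt // => x xH.
have [y0 y0T [y0l y0G]] := Tnodes (introT andP (conj j4 (leq_trans (ltnW jd) d9))) xH.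
exists y0 => //; case: (boolP (all keep (leaves y0))) => [ky | /allPn[u uy0 uk]].
  by have [r Er yr] := prune_subtree y0T ky; rewrite /T' Er; exact: subtree_graftl.
have y0E w : w \in leaves y0 -> (w \in hatS e S j) && (w \in (sgcomp (Hsg e S j) x).1).
  by move=> wy0; rewrite -in_setI -(mem_leaves_set w y0l).
have hatSjd := subsetP (hatS_mono e S (ltnW jd)).
have [uSj ux] := andP (y0E u uy0).
have uM : u \in (Gt e M).1 by move: uk; rewrite /keep hatSjd //= negbK.
have /sgcomps1P[y1 y1Y uy1] := ext_MH uM (hatS_Hsg1 (hatSjd u uSj)).
have [n0 n0T [n0M n0l]] := Mnodes y1Y.
apply: (subtree_trans _ (subtree_graftr _ _)); apply: (subtree_trans _ n0M).
apply: (subtree_of_leaves_subset Tuniq y0T n0T) => w wy0.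
have [wSj wx] := andP (y0E w wy0).
have compjd := subsetP (sgcomp_Hsg1S e S x (ltnW jd)).
rewrite (mem_leaves_set w n0l) in_setI hatSjd //=.
exact: sgcomp1_share symH uy1 (compjd u ux) (compjd w wx).
Qed.

Lemma ext_comp_v1 : (sgcomp H' v).1 = (Gt e M).1.
Proof.
apply/setP => z; rewrite mem_sgcomp1 ext_M1 ext_H'1; apply/idP/idP.
  rewrite -ext_M1 => /andP[_].
  apply: (@connect_forward_closed _ _ (fun q => q \in (Gt e M).1)); last first.
    by rewrite ext_M1 setU11.
  move=> p q /= pM; rewrite /sgrel ext_H'2 => /orP[|pq].
    by rewrite mem_Gv2 => /and3P[_ qv _]; rewrite ext_M1 qv.
  have /andP[pH qH] := Hsg_edge pq.
  have /sgcomps1P[y0 y0Y py0] := ext_MH pM pH.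
  rewrite ext_M1; apply/orP; right; apply/sgcomps1P; exists y0 => //.
  move: py0; rewrite !mem_sgcomp1 qH => /andP[_ c]; exact: connect_trans c (connect1 pq).
case/orP=> [zv | /sgcomps1P[y0 y0Y]]; first by rewrite zv ext_conn_v.
rewrite mem_sgcomp1 => /andP[zH c]; rewrite zH orbT /=.
apply: connect_trans (ext_conn_v _) (ext_connH c).
by move/subsetP: YN => /(_ y0 y0Y); rewrite in_setI in_setU1 => /andP[-> _]; rewrite orbT.
Qed.

Lemma ext_comp_v : sgcomp H' v = Gt e M.
Proof.
rewrite [Gt e M]surjective_pairing -ext_comp_v1 [sgcomp H' v]surjective_pairing.
congr pair; apply/setP => p; rewrite mem_sgcomp2 MG sgU2 in_setU ext_H'2.
apply/idP/idP.
  case/andP=> /orP[-> // | pH] c; apply/orP; right; apply/sgcomps2P.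
  have /andP[p1H _] := Hsg_edge pH.
  have : p.1 \in (Gt e M).1 by rewrite -ext_comp_v1 mem_sgcomp1 ext_H'1 p1H orbT.
  move/ext_MH/(_ p1H)/sgcomps1P=> [y0 y0Y py0]; exists y0 => //.
  by move: py0; rewrite mem_sgcomp1 mem_sgcomp2 pH => /andP[].
case/orP=> [pv | /sgcomps2P[y0 y0Y]].
  by rewrite pv ext_conn_v //; move: pv; rewrite mem_Gv2 => /and3P[].
rewrite mem_sgcomp2 => /andP[pH c]; rewrite pH orbT /=.
have : y0 \in (sgcomp H' v).1.
  rewrite ext_comp_v1 ext_M1; apply/orP; right; apply/sgcomps1P; exists y0 => //.
  rewrite mem_sgcomp1 connect0 andbT.
  by move/subsetP: YN => /(_ y0 y0Y); rewrite in_setI => /andP[].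
by rewrite mem_sgcomp1 => /andP[_ cv]; exact: connect_trans cv (ext_connH c).
Qed.

Lemma ext_comp_far x : ~~ connect (sgrel H') x v -> sgcomp H' x = sgcomp H x.
Proof.
move=> nxv; have far z : connect (sgrel H') x z -> z \notin cnbhd e v.
  move=> cz; apply: contra nxv => zv; apply: connect_trans cz _.
  by rewrite (sym_connect_sym symH'); exact: ext_conn_v.
have cE z : connect (sgrel H') x z = connect (sgrel H) x z.
  apply/idP/idP; last exact: ext_connH.
  apply: connect_restrict => y q cy; rewrite /sgrel ext_H'2 => /orP[|//].
  by rewrite mem_Gv2 => /and3P[yv _ _]; move: (far y cy); rewrite yv.
rewrite /sgcomp; congr pair; apply/setP => z; rewrite !inE cE.
  rewrite ext_H'1; case: (boolP (connect (sgrel H) x z)) => c; rewrite ?andbF //.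
  by move: (far z); rewrite cE => /(_ c)/negbTE ->.
rewrite ext_H'2; case: (boolP (connect (sgrel H) x z.1)) => c; rewrite ?andbF //.
by move: (far z.1); rewrite cE mem_Gv2 => /(_ c)/negbTE ->.
Qed.

Lemma ext_nodes_ge j : d <= j -> represents_comps e S' T' j.
Proof.
move=> dj; rewrite /represents_comps ext_hatS_ge // (_ : Hsg e S' j = H'); last first.
  by rewrite /H' !ext_Hsg_ge.
move=> x xH'; case: (boolP (connect (sgrel H') x v)) => cxv.
  rewrite (sgcomp_eq symH' cxv) ext_comp_v; exists M; first exact: subtree_graftr.
  split=> //; rewrite Ml; apply/setP => u; rewrite in_setI ext_M1 !in_setU1 !in_setI.
  case: (eqVneq u v) => //= uv; case uS: (u \in hatS e S d) => //=.
  by case/andP: (ext_hatS_nadj uS) => _ nvu; rewrite inE (negbTE nvu).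
have xH : x \in H.1.
  move: xH'; rewrite ext_H'1 => /orP[xv|//]; case/negP: cxv.
  by rewrite (sym_connect_sym symH') ext_conn_v.
rewrite (ext_comp_far cxv); have [n nT [nl nG]] := Tnodes (introT andP (conj d4 d9)) xH.
exists n; last first.
  split=> //; rewrite nl; apply/setP => u; rewrite !in_setI in_setU1.
  by case: (eqVneq u v) => [->|]; rewrite ?(negbTE (ext_v_ncomp x)) ?andbF.
have : all keep (leaves n).
  apply/allP => u un; move: un; rewrite (mem_leaves_set u nl) in_setI => /andP[uS ux].
  rewrite /keep uS /=; apply: contra cxv => uM.
  have /sgcomps1P[y1 y1Y uy1] := ext_MH uM (hatS_Hsg1 uS).
  have xx : x \in (sgcomp H x).1 by rewrite mem_sgcomp1 xH connect0.
  move: (sgcomp1_share symH uy1 ux xx); rewrite mem_sgcomp1 => /andP[_ cy1x].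
  rewrite (sym_connect_sym symH'); apply: connect_trans (ext_conn_v _) (ext_connH cy1x).
  by move/subsetP: YN => /(_ y1 y1Y); rewrite in_setI in_setU1 => /andP[-> _]; rewrite orbT.
by case/(prune_subtree nT) => r Er nr; rewrite /T' Er; exact: subtree_graftl.
Qed.

Lemma ext_graft_spec : respects e T' S' /\ forall j, 4 <= j <= 9 -> represents_comps e S' T' j.
Proof.
split; first by split; [exact: ext_tree_rep | split; [exact: ext_leaves_uniq | exact: ext_leaves]].
move=> j /andP[j4 _]; case: (ltnP j d) => [jd | dj].
  exact: ext_nodes_lt.
exact: ext_nodes_ge.
Qed.

End Grafting.

Lemma ext_good_tree :
  exists T0, respects e T0 S' /\ forall j, 4 <= j <= 9 -> represents_comps e S' T0 j.
Proof.
have sub : {subset enum (nbhd e v) <= nbhd e v} by move=> z; rewrite mem_enum.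
have [M [Y [Mrep Muniq YN MG [Ml Mcov Mnodes]]]] := star_tree sub.
rewrite set_enum in Mcov.
by eexists; exact: ext_graft_spec Mrep Muniq YN MG Ml Mcov Mnodes.
Qed.

End Extension.

Theorem good_add_vertex (V : finType) (Vs : {set V}) (e : rel V) (S : {set V}) (v : V) :
  symmetric e -> (forall x, ~~ e x x) -> good Vs e S -> v \in Vs ->
  4 <= deg e v <= 9 -> v \notin (Hsg e S (deg e v)).1 ->
  (forall x, x \in (Hsg e S (deg e v)).1 ->
     #|nbhd e v :&: (sgcomp (Hsg e S (deg e v)) x).1| <= 2) ->
  good Vs e (v |: hatS e S (deg e v)).
Proof.
move=> esym eirr [SVs Sind Sdeg [T [[Trep [Tuniq Tleaves]] Tnodes]]] vVs /andP[d4 d9] vH Hcap.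
have S'S u : u \in hatS e S (deg e v) -> u \in S := subsetP (hatS_sub e S _) u.
split.
- by rewrite subUset sub1set vVs (subset_trans (hatS_sub e S _) SVs).
- move=> x y; rewrite !in_setU1 => /predU1P[->|xS] /predU1P[->|yS] //.
  + by case/andP: (ext_hatS_nadj esym vH yS).
  + by rewrite esym; case/andP: (ext_hatS_nadj esym vH xS).
  + exact: Sind (S'S x xS) (S'S y yS).
- by move=> x; rewrite in_setU1 => /predU1P[->|/S'S]; [| exact: Sdeg].
- exact: (ext_good_tree esym d4 d9 vH Hcap Trep Tuniq Tleaves Tnodes).
Qed.

Lemma phi_gt_not_ge (a b : nat -> nat) : phi_gt a b -> ~ phi_ge b a.
Proof.
case=> j [/andP[j4 j9] eq_lt ba] [eq | [k [/andP[k4 _] eq_lt' ab]]].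
  by move: ba; rewrite eq ?j4 // ltnn.
move: ba ab; case: (ltngtP j k) => [jk|kj|->]; last by move=> ba /(ltn_trans ba); rewrite ltnn.
  by rewrite (eq_lt' j) ?j4 // ltnn.
by rewrite (eq_lt k) ?k4 // ltnn.
Qed.

(* Adding a vertex of degree [d] and forgetting the vertices of degree above [d]
   leaves [S_4, ..., S_(d-1)] unchanged and enlarges [S_d]. *)
Lemma phi_gt_add_hatS (V : finType) (e : rel V) (S : {set V}) (v : V) :
  v \notin S -> 4 <= deg e v <= 9 ->
  phi_gt (phi e (v |: hatS e S (deg e v))) (phi e S).
Proof.
move=> vS /andP[d4 d9]; exists (deg e v); split; rewrite ?d4 //.
  move=> k /andP[k4 kd]; rewrite /phi (_ : Si e _ k = Si e S k) //.
  apply/setP => x; rewrite !inE.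
  case: (eqVneq x v) => [->|_] /=; first by rewrite (negbTE vS) (gtn_eqF kd).
  by case: (x \in S) => //=; case: (eqVneq (deg e x) k) => [->|]; rewrite ?andbF // k4 ltnW.
rewrite /phi (_ : Si e (v |: _) _ = v |: Si e S (deg e v)).
  by rewrite cardsU1 inE (negbTE vS) add1n.
apply/setP => x; rewrite !inE; case: (eqVneq x v) => [->|_] /=; first exact: eqxx.
case: (x \in S) => //=.
by case: (eqVneq (deg e x) (deg e v)) => [->|]; rewrite ?andbF // d4 leqnn.
Qed.

Unset Implicit Arguments.

Theorem lemma6 (V : finType) (Vs : {set V}) (e : rel V) (Fs : seq {set V})
    (S : {set V}) (i : nat) (v : V) :
  is_triang Vs e Fs -> irreducible Vs e Fs -> 1 <= euler_genus Vs e Fs ->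
  good Vs e S ->
  (forall S' : {set V}, good Vs e S' -> phi_ge (phi e S) (phi e S')) ->
  4 <= i <= 9 ->
  v \in Vs -> v \notin (Hsg e S i).1 -> deg e v <= i ->
  exists2 x, x \in (Hsg e S i).1 & 3 <= #|nbhd e v :&: (sgcomp (Hsg e S i) x).1|.
Proof.
move=> Ht irr genus Sgood Smax /andP[_ i9] vVs vHi di.
have d4 := irreducible_deg_ge4 Ht irr genus vVs.
apply/exists_inP; apply: contraT => /exists_inPn small.
have Hdi := Hsg1S e S di.
have vHd : v \notin (Hsg e S (deg e v)).1 by apply: contra vHi; apply: (subsetP Hdi).
have vS : v \notin S.
  by apply: contra vHd => vS; apply: hatS_Hsg1; rewrite inE vS d4 leqnn.
have cap x : x \in (Hsg e S (deg e v)).1 ->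
    #|nbhd e v :&: (sgcomp (Hsg e S (deg e v)) x).1| <= 2.
  move=> xHd; have := small x (subsetP Hdi x xHd); rewrite -ltnNge ltnS.
  by apply: leq_trans; apply/subset_leq_card/setIS/sgcomp_Hsg1S.
have dv : 4 <= deg e v <= 9 by rewrite d4 (leq_trans di i9).
have := good_add_vertex (triang_sym Ht) (triang_irr Ht) Sgood vVs dv vHd cap.
by move/Smax; case/(phi_gt_not_ge (phi_gt_add_hatS vS dv)).
Qed.
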